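(* Let $(B,\sqsubseteq)$ be an ordered functor such that $B$ has a cofree comonad, and let $f,g\colon X\to BX$ be $B$-coalgebras on a common carrier $X$. If $f(x)\sqsubseteq_{BX} g(x)$ for all $x\in X$, then $f^\infty(x)\lesssim_{B^\infty X} g^\infty(x)$ for all $x\in X$.
   Context: An ordered functor $(B,\sqsubseteq)$ is a functor $B\colon\mathsf{Set}\to\mathsf{Set}$ together with a preorder $\sqsubseteq_{BX}$ on $BX$ for every set $X$, such that $Bf\colon BX\to BY$ is monotone for every function $f\colon X\to Y$. For a relation $R\subseteq X\times Y$ with projections $\pi_1,\pi_2$, $\mathsf{Rel}(B)(R)=\{(b,c)\in BX\times BY\mid \exists d\in BR.\ B\pi_1(d)=b,\ B\pi_2(d)=c\}$ and $\mathsf{Rel}_{\sqsubseteq}(B)(R)=\{(b,c)\mid \exists b',c'.\ b\sqsubseteq_{BX}b',\ (b',c')\in\mathsf{Rel}(B)(R),\ c'\sqsubseteq_{BY}c\}$. Given coalgebras $f\colon X\to BX$, $g\colon Y\to BY$, a relation $R\subseteq X\times Y$ is a simulation if $(f(x),g(y))\in\mathsf{Rel}_{\sqsubseteq}(B)(R)$ for all $(x,y)\in R$; similarity is the greatest simulation. Cofree comonad: for each set $X$ there is a set $B^\infty X$ with maps $\theta_X\colon B^\infty X\to BB^\infty X$ and $\epsilon_X\colon B^\infty X\to X$ such that $\langle\theta_X,\epsilon_X\rangle$ is a final coalgebra for the functor $B(-)\times X$. For a coalgebra $f\colon X\to BX$, its coinductive extension $f^\infty\colon X\to B^\infty X$ is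 the unique $B(-)\times X$-coalgebra morphism from $\langle f,\mathrm{id}_X\rangle$ to $\langle\theta_X,\epsilon_X\rangle$. The functor $B(-)\times X$ is ordered by $(b,x)\,\widetilde{\sqsubseteq}\,(c,y)$ iff $b\sqsubseteq c$ (in $BW$) and $x=y$; $\lesssim_{B^\infty X}$ denotes the similarity of the coalgebra $\langle\theta_X,\epsilon_X\rangle$ with itself with respect to the ordered functor $(B(-)\times X,\widetilde{\sqsubseteq})$. *)

Set Implicit Arguments.

Record Functor := {
  F_obj :> Type -> Type;
  fmap : forall X Y : Type, (X -> Y) -> F_obj X -> F_obj Y;
  fmap_id : forall (X : Type) (b : F_obj X), fmap (fun x : X => x) b = b;
  fmap_comp : forall (X Y Z : Type) (f : X -> Y) (g : Y -> Z) (b : F_obj X),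
      fmap (fun x => g (f x)) b = fmap g (fmap f b)
}.
Arguments fmap {_ _ _} _ _.

Record OrderedFunctor := {
  OF_functor :> Functor;
  ofle : forall X : Type, OF_functor X -> OF_functor X -> Prop;
  ofle_refl : forall X (b : OF_functor X), ofle X b b;
  ofle_trans : forall X (a b c : OF_functor X), ofle X a b -> ofle X b c -> ofle X a c;
  ofle_mono : forall X Y (f : X -> Y) (a b : OF_functor X),
      ofle X a b -> ofle Y (fmap f a) (fmap f b)
}.
Arguments ofle {_ _} _ _.

(** Relation lifting, stated for an arbitrary "functor action"
    (G, gmap) and order gle, so it can be instantiated both with B
    and with B(-) x X. *)
Definition relGraph (X Y : Type) (R : X -> Y -> Prop) : Type :=
  { p : X * Y | R (fst p) (snd p) }.
Definition pi1 X Y (R : X -> Y -> Prop) (p : relGraph R) : X := fst (proj1_sig p).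
Definition pi2 X Y (R : X -> Y -> Prop) (p : relGraph R) : Y := snd (proj1_sig p).

Definition RelLift (G : Type -> Type)
  (gmap : forall A C : Type, (A -> C) -> G A -> G C)
  (X Y : Type) (R : X -> Y -> Prop) (b : G X) (c : G Y) : Prop :=
  exists d : G (relGraph R),
    gmap _ _ (@pi1 X Y R) d = b /\ gmap _ _ (@pi2 X Y R) d = c.

Definition RelLiftLe (G : Type -> Type)
  (gmap : forall A C : Type, (A -> C) -> G A -> G C)
  (gle : forall A : Type, G A -> G A -> Prop)
  (X Y : Type) (R : X -> Y -> Prop) (b : G X) (c : G Y) : Prop :=
  exists (b' : G X) (c' : G Y),
    gle X b b' /\ @RelLift G gmap X Y R b' c' /\ gle Y c' c.

Definition simulation (G : Type -> Type)
  (gmap : forall A C : Type, (A -> C) -> G A -> G C)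
  (gle : forall A : Type, G A -> G A -> Prop)
  (X Y : Type) (f : X -> G X) (g : Y -> G Y) (R : X -> Y -> Prop) : Prop :=
  forall x y, R x y -> @RelLiftLe G gmap gle X Y R (f x) (g y).

Definition similar (G : Type -> Type)
  (gmap : forall A C : Type, (A -> C) -> G A -> G C)
  (gle : forall A : Type, G A -> G A -> Prop)
  (X Y : Type) (f : X -> G X) (g : Y -> G Y) (x : X) (y : Y) : Prop :=
  exists R : X -> Y -> Prop, @simulation G gmap gle X Y f g R /\ R x y.

Definition BxF (B : OrderedFunctor) (X : Type) (W : Type) : Type := (B W * X)%type.
Definition BxF_map (B : OrderedFunctor) (X : Type) (A C : Type) (h : A -> C)
  (p : BxF B X A) : BxF B X C := (fmap h (fst p), snd p).
Definition BxF_le (B : OrderedFunctor) (X : Type) (W : Type)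
  (p q : BxF B X W) : Prop := ofle (fst p) (fst q) /\ snd p = snd q.

Definition is_BxF_morphism (B : OrderedFunctor) (X Y T : Type)
  (theta : T -> B T) (eps : T -> X) (c : Y -> BxF B X Y) (h : Y -> T) : Prop :=
  forall y, (theta (h y), eps (h y)) = @BxF_map B X Y T h (c y).

(** B has a cofree comonad: for each set X, a final B(-) x X coalgebra
    <theta_X, eps_X> on B^infty X. *)
Record CofreeComonad (B : OrderedFunctor) := {
  Binf : Type -> Type;
  theta : forall X : Type, Binf X -> B (Binf X);
  eps : forall X : Type, Binf X -> X;
  cofree_final : forall (X Y : Type) (c : Y -> BxF B X Y),
    (exists h : Y -> Binf X, @is_BxF_morphism B X Y (Binf X) (@theta X) (@eps X) c h) /\
    (forall h1 h2 : Y -> Binf X,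
        @is_BxF_morphism B X Y (Binf X) (@theta X) (@eps X) c h1 ->
        @is_BxF_morphism B X Y (Binf X) (@theta X) (@eps X) c h2 ->
        forall y, h1 y = h2 y)
}.

Definition pairId (B : OrderedFunctor) (X : Type) (f : X -> B X) : X -> BxF B X X :=
  fun x => (f x, x).

Definition is_coind_ext (B : OrderedFunctor) (C : CofreeComonad B) (X : Type)
  (f : X -> B X) (h : X -> Binf C X) : Prop :=
  @is_BxF_morphism B X X (Binf C X) (@theta B C X) (@eps B C X) (@pairId B X f) h.

Definition simBinf (B : OrderedFunctor) (C : CofreeComonad B) (X : Type)
  (s t : Binf C X) : Prop :=
  let coalg : Binf C X -> BxF B X (Binf C X) :=
    fun u => (@theta B C X u, @eps B C X u) in
  @similar (BxF B X) (@BxF_map B X) (@BxF_le B X) _ _ coalg coalg s t.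


(* The relation {(f^infty x, g^infty x) | x in X} is a simulation.  Unfolding
   both extensions, the B-parts are B f^infty (f x) and B g^infty (g x);
   monotonicity of B f^infty moves the first up to B f^infty (g x), and that
   pair is the image of the single witness g x in B X, hence lies in the
   lifting of the relation. *)

Definition pairRel {Z S T : Type} (h : Z -> S) (k : Z -> T) (s : S) (t : T) : Prop :=
  exists z, s = h z /\ t = k z.

Lemma RelLift_fmap_pairRel (F : Functor) (Z S T : Type) (h : Z -> S) (k : Z -> T)
  (b : F Z) :
  RelLift F (fun A C => @fmap F A C) (pairRel h k) (fmap h b) (fmap k b).
Proof.
  set (toGraph := fun z : Z =>
         exist (fun p : S * T => pairRel h k (fst p) (snd p))
               (h z, k z) (ex_intro _ z (conj eq_refl eq_refl))).
  exists (fmap toGraph b); split; rewrite <- fmap_comp; reflexivity.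
Qed.

Lemma RelLift_BxF (B : OrderedFunctor) (X S T : Type) (R : S -> T -> Prop)
  (b : B S) (c : B T) (x : X) :
  RelLift B (fun A C => @fmap B A C) R b c ->
  RelLift (BxF B X) (@BxF_map B X) R (b, x) (c, x).
Proof.
  intros [d [Hb Hc]].
  exists (d, x); unfold BxF_map; simpl; rewrite Hb, Hc; split; reflexivity.
Qed.

Lemma BxF_le_refl (B : OrderedFunctor) (X W : Type) (p : BxF B X W) :
  BxF_le p p.
Proof. split; [apply ofle_refl | reflexivity]. Qed.

Section CoinductiveExtension.

Context {B : OrderedFunctor} {C : CofreeComonad B} {X : Type}.

Lemma coind_ext_unfold {f : X -> B X} {h : X -> Binf C X} (x : X) :
  is_coind_ext C f h -> theta C X (h x) = fmap h (f x) /\ eps C X (h x) = x.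
Proof.
  intros Hh; specialize (Hh x); unfold pairId, BxF_map in Hh; simpl in Hh.
  injection Hh; split; assumption.
Qed.

Lemma coind_ext_pointwise_le_simulation {f g : X -> B X} {finf ginf : X -> Binf C X} :
  is_coind_ext C f finf -> is_coind_ext C g ginf ->
  (forall x, ofle (f x) (g x)) ->
  simulation (BxF B X) (@BxF_map B X) (@BxF_le B X)
    (fun u => (theta C X u, eps C X u)) (fun u => (theta C X u, eps C X u))
    (pairRel finf ginf).
Proof.
  intros Hf Hg Hle s t [x [-> ->]].
  destruct (coind_ext_unfold x Hf) as [Hf_theta Hf_eps].
  destruct (coind_ext_unfold x Hg) as [Hg_theta Hg_eps].
  exists (fmap finf (g x), x), (fmap ginf (g x), x).
  split; [| split].
  - split; simpl; [rewrite Hf_theta; apply ofle_mono, Hle | exact Hf_eps].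
  - apply RelLift_BxF, RelLift_fmap_pairRel.
  - rewrite Hg_theta, Hg_eps; apply BxF_le_refl.
Qed.

End CoinductiveExtension.

Theorem mainTheorem3 (B : OrderedFunctor) (C : CofreeComonad B) (X : Type)
  (f g : X -> B X) (finf ginf : X -> Binf C X) :
  @is_coind_ext B C X f finf ->
  @is_coind_ext B C X g ginf ->
  (forall x : X, ofle (f x) (g x)) ->
  forall x : X, @simBinf B C X (finf x) (ginf x).
Proof.
  intros Hf Hg Hle x.
  exists (pairRel finf ginf); split.
  - exact (coind_ext_pointwise_le_simulation Hf Hg Hle).
  - exists x; split; reflexivity.
Qed.
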